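(* Let $\mathcal{P}\subset\mathbb{R}^3$ be a polyhedron with radius $1$ and let $P_1,P_2,P_3,Q_1,Q_2,Q_3\in\mathcal{P}$ (not necessarily distinct) such that the triples $(P_1,P_2,P_3)$ and $(Q_1,Q_2,Q_3)$ are congruent. Let $\varepsilon>0$ and $\bar\theta_1,\bar\varphi_1,\bar\theta_2,\bar\varphi_2,\bar\alpha\in\mathbb{R}$; set $\overline{X_k}=X(\bar\theta_k,\bar\varphi_k)$, $\overline{M_k}=M(\bar\theta_k,\bar\varphi_k)$ for $k=1,2$. Assume: (A) there exist $\sigma_P,\sigma_Q\in\{0,1\}$ with $(-1)^{\sigma_P}\langle\overline{X_1},P_i\rangle>\sqrt2\varepsilon$ and $(-1)^{\sigma_Q}\langle\overline{X_2},Q_i\rangle>\sqrt2\varepsilon$ for $i=1,2,3$; (S) $P_1,P_2,P_3$ are $\varepsilon$-spanning for $(\bar\theta_1,\bar\varphi_1)$ and $Q_1,Q_2,Q_3$ are $\varepsilon$-spanning for $(\bar\theta_2,\bar\varphi_2)$; (B) there are $r>0$ with $\min_{i=1,2,3}\|\overline{M_2}Q_i\|>r+\sqrt2\varepsilon$ and $\delta\in\mathbb{R}$ with $\delta\ge\max_{i=1,2,3}\|R(\bar\alpha)\overline{M_1}P_i-\overline{M_2}Q_i\|/2$, such that for all $i=1,2,3$ and every $Q_j\in\mathcal{P}\setminus\{Q_i\}$, \[ \frac{\langle\overline{M_2}Q_i,\overline{M_2}(Q_i-Q_j)\rangle-2\varepsilon\|Q_i-Q_j\|(\sqrt2+\varepsilon)}{(\|\overline{M_2}Q_i\|+\sqrt2\varepsilon)(\|\overline{M_2}(Q_i-Q_j)\|+2\sqrt2\varepsilon)}>\frac{\sqrt5\varepsilon+\delta}{r}.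 \] Then there is no $(\theta_1,\varphi_1,\theta_2,\varphi_2,\alpha)$ with $|\theta_k-\bar\theta_k|,|\varphi_k-\bar\varphi_k|,|\alpha-\bar\alpha|\le\varepsilon$ ($k=1,2$) such that $R(\alpha)M(\theta_1,\varphi_1)\mathcal{P}\subset\operatorname{int}\operatorname{conv}(M(\theta_2,\varphi_2)\mathcal{P})$.
   Context: $R(\alpha)=\begin{pmatrix}\cos\alpha&-\sin\alpha\\ \sin\alpha&\cos\alpha\end{pmatrix}$; $X(\theta,\varphi)=(\cos\theta\sin\varphi,\sin\theta\sin\varphi,\cos\varphi)^t$; $M(\theta,\varphi)=\begin{pmatrix}-\sin\theta&\cos\theta&0\\ -\cos\theta\cos\varphi&-\sin\theta\cos\varphi&\sin\varphi\end{pmatrix}$. A polyhedron is a finite non-degenerate set of points of $\mathbb{R}^3$ in convex position; radius $1$ means all its points have norm $\le1$ with equality for some. Triples $(P_1,P_2,P_3)$, $(Q_1,Q_2,Q_3)$ in $\mathbb{R}^3$ are congruent if there is an orthonormal $L\in\mathbb{R}^{3\times3}$ with $P_i=LQ_i$ for $i=1,2,3$. Given $\theta,\varphi\in\mathbb{R}$, $\varepsilon>0$ and $M=M(\theta,\varphi)$, points $P_1,P_2,P_3\in\mathbb{R}^3$ with norms $\le1$ are $\varepsilon$-spanning for $(\theta,\varphi)$ if $\langle R(\pi/2)MP_1,MP_2\rangle$, $\langle R(\pi/2)MP_2,MP_3\rangle$, $\langle R(\pi/2)MP_3,MP_1\rangle$ are all $>2\varepsilon(\sqrt2+\varepsilon)$.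 Matrices act on point sets elementwise; norms of matrices are operator norms. *)

From Stdlib Require Import Reals List.
Import ListNotations.
Open Scope R_scope.

Record V3 := mkV3 { vx : R; vy : R; vz : R }.
Record V2 := mkV2 { wx : R; wy : R }.

Definition add3 (p q : V3) : V3 := mkV3 (vx p + vx q) (vy p + vy q) (vz p + vz q).
Definition sub3 (p q : V3) : V3 := mkV3 (vx p - vx q) (vy p - vy q) (vz p - vz q).
Definition scal3 (c : R) (p : V3) : V3 := mkV3 (c * vx p) (c * vy p) (c * vz p).
Definition zero3 : V3 := mkV3 0 0 0.
Definition dot3 (p q : V3) : R := vx p * vx q + vy p * vy q + vz p * vz q.
Definition norm3 (p : V3) : R := sqrt (dot3 p p).

Definition add2 (p q : V2) : V2 := mkV2 (wx p + wx q) (wy p + wy q).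
Definition sub2 (p q : V2) : V2 := mkV2 (wx p - wx q) (wy p - wy q).
Definition scal2 (c : R) (p : V2) : V2 := mkV2 (c * wx p) (c * wy p).
Definition zero2 : V2 := mkV2 0 0.
Definition dot2 (p q : V2) : R := wx p * wx q + wy p * wy q.
Definition norm2 (p : V2) : R := sqrt (dot2 p p).

Definition Rot (a : R) (v : V2) : V2 :=
  mkV2 (cos a * wx v - sin a * wy v) (sin a * wx v + cos a * wy v).

Definition Xv (th ph : R) : V3 := mkV3 (cos th * sin ph) (sin th * sin ph) (cos ph).

Definition Mm (th ph : R) (p : V3) : V2 :=
  mkV2 (- sin th * vx p + cos th * vy p)
       (- cos th * cos ph * vx p - sin th * cos ph * vy p + sin ph * vz p).

Definition lincomb3 (l : list (R * V3)) : V3 :=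
  fold_right (fun cq acc => add3 (scal3 (fst cq) (snd cq)) acc) zero3 l.
Definition lincomb2 (l : list (R * V2)) : V2 :=
  fold_right (fun cq acc => add2 (scal2 (fst cq) (snd cq)) acc) zero2 l.
Definition wsum {A} (l : list (R * A)) : R :=
  fold_right (fun cq acc => fst cq + acc) 0 l.

Definition conv3 (S : V3 -> Prop) (x : V3) : Prop :=
  exists l : list (R * V3),
    Forall (fun cq => 0 <= fst cq /\ S (snd cq)) l /\ wsum l = 1 /\ x = lincomb3 l.
Definition conv2 (S : V2 -> Prop) (x : V2) : Prop :=
  exists l : list (R * V2),
    Forall (fun cq => 0 <= fst cq /\ S (snd cq)) l /\ wsum l = 1 /\ x = lincomb2 l.

Definition interior2 (S : V2 -> Prop) (x : V2) : Prop :=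
  exists r, 0 < r /\ forall y, norm2 (sub2 y x) < r -> S y.

Definition det3 (a b c : V3) : R :=
  vx a * (vy b * vz c - vz b * vy c)
  - vy a * (vx b * vz c - vz b * vx c)
  + vz a * (vx b * vy c - vy b * vx c).

(* A polyhedron: a finite set (given as a list) of points of R^3 which is
   non-degenerate (not contained in a plane, i.e. it has four affinely
   independent points) and in convex position (no point lies in the convex
   hull of the other points). *)
Definition polyhedron (Pl : list V3) : Prop :=
  (exists a b c d, In a Pl /\ In b Pl /\ In c Pl /\ In d Pl /\
     det3 (sub3 b a) (sub3 c a) (sub3 d a) <> 0) /\
  (forall p, In p Pl -> ~ conv3 (fun q => In q Pl /\ q <> p) p).

Definition radius1 (Pl : list V3) : Prop :=
  (forall p, In p Pl -> norm3 p <= 1) /\ (exists p, In p Pl /\ norm3 p = 1).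

(* Orthonormal matrix L with columns c1 c2 c3: L q = qx c1 + qy c2 + qz c3 *)
Definition applyL (c1 c2 c3 : V3) (q : V3) : V3 :=
  add3 (scal3 (vx q) c1) (add3 (scal3 (vy q) c2) (scal3 (vz q) c3)).
Definition orthonormal3 (c1 c2 c3 : V3) : Prop :=
  dot3 c1 c1 = 1 /\ dot3 c2 c2 = 1 /\ dot3 c3 c3 = 1 /\
  dot3 c1 c2 = 0 /\ dot3 c1 c3 = 0 /\ dot3 c2 c3 = 0.

(* triples indexed by 0,1,2 *)
Definition congruent (P Q : nat -> V3) : Prop :=
  exists c1 c2 c3, orthonormal3 c1 c2 c3 /\
    forall i, (i < 3)%nat -> P i = applyL c1 c2 c3 (Q i).

Definition eps_spanning (th ph eps : R) (P : nat -> V3) : Prop :=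
  (forall i, (i < 3)%nat -> norm3 (P i) <= 1) /\
  dot2 (Rot (PI/2) (Mm th ph (P 0%nat))) (Mm th ph (P 1%nat)) > 2 * eps * (sqrt 2 + eps) /\
  dot2 (Rot (PI/2) (Mm th ph (P 1%nat))) (Mm th ph (P 2%nat)) > 2 * eps * (sqrt 2 + eps) /\
  dot2 (Rot (PI/2) (Mm th ph (P 2%nat))) (Mm th ph (P 0%nat)) > 2 * eps * (sqrt 2 + eps).

From Stdlib Require Import Reals List Lra Psatz Nsatz Classical.
Open Scope R_scope.

(* Suppose [R(a) M(t1,f1) P] lies in the interior of the convex hull of [M(t2,f2) P] for
   parameters [eps]-close to the given ones.  Under such perturbations [M] and [X] move by at
   most [sqrt 2 eps] in operator norm and [R] by at most [eps].

   By (B), each [M(t2,f2) Q_i] is a vertex of the projected polygon, which lies in a cone of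
   opening [k = (sqrt 5 eps + delta) / r] at that vertex, and [R(a) M(t1,f1) P_i] is within
   [2 k |M(t2,f2) Q_i|] of it.  An interior point of that cone so close to its apex is strictly
   shorter than the apex, hence [|M(t1,f1) P_i| < |M(t2,f2) Q_i|].  Since [|P_i| = |Q_i|] and
   [|M p|^2 + <X, p>^2 = |p|^2], the heights compare the other way:
   [0 < s2 <X2, Q_i> < s1 <X1, P_i>] with the signs [s1, s2] of (A).

   Transport [s1 X1] by the congruence to a vector [w] with [|w| <= 1] and [<w, Q_i> = s1 <X1, P_i>].
   The component of [w] orthogonal to [s2 X2] has positive inner product with every [Q_i], so its
   image under [M(t2,f2)] has positive inner product with the three vectors [M(t2,f2) Q_i].  By (S)
   these wind positively around the origin, and no open half-plane contains such a triple. *)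

Lemma Rabs_le_bounds x c : Rabs x <= c -> - c <= x <= c.
Proof.
  intros H. pose proof (Rle_abs x). pose proof (Rle_abs (- x)).
  rewrite Rabs_Ropp in *. lra.
Qed.

Lemma Rabs_sqr x : x * x = Rabs x * Rabs x.
Proof. rewrite <- Rabs_mult, Rabs_right; nra. Qed.

Lemma sqr_le_of_Rabs_le x e : Rabs x <= e -> x * x <= e * e.
Proof. intros H. rewrite Rabs_sqr. pose proof (Rabs_pos x). nra. Qed.

Lemma sqrt2_sqr : sqrt 2 * sqrt 2 = 2.
Proof. apply sqrt_sqrt; lra. Qed.

Lemma sqrt2_bounds : 0 < sqrt 2 <= 3 / 2.
Proof.
  split; [apply sqrt_lt_R0; lra|].
  apply Rsqr_incr_0_var; [unfold Rsqr; rewrite sqrt2_sqr|]; lra.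
Qed.

Lemma sqrt5_ge : 11 / 5 <= sqrt 5.
Proof. apply Rsqr_incr_0_var; [unfold Rsqr; rewrite sqrt_sqrt|apply sqrt_pos]; lra. Qed.

Lemma sign_sqr n : (-1) ^ n * (-1) ^ n = 1.
Proof. rewrite <- Rpow_mult_distr. replace (-1 * -1) with 1 by ring. apply pow1. Qed.

Lemma sign_cases s : s * s = 1 -> s = 1 \/ s = -1.
Proof.
  intros H. assert (E : (s - 1) * (s + 1) = 0) by lra.
  destruct (Rmult_integral _ _ E); [left|right]; lra.
Qed.

(** * Euclidean geometry of the plane and of space *)

Lemma dot2_ge0 v : 0 <= dot2 v v.
Proof. unfold dot2; nra. Qed.

Lemma dot3_ge0 v : 0 <= dot3 v v.
Proof. unfold dot3; nra. Qed.

Lemma norm2_ge0 v : 0 <= norm2 v.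
Proof. apply sqrt_pos. Qed.

Lemma norm3_ge0 v : 0 <= norm3 v.
Proof. apply sqrt_pos. Qed.

Lemma norm2_sqr v : norm2 v * norm2 v = dot2 v v.
Proof. apply sqrt_sqrt, dot2_ge0. Qed.

Lemma norm3_sqr v : norm3 v * norm3 v = dot3 v v.
Proof. apply sqrt_sqrt, dot3_ge0. Qed.

Lemma norm2_le_of_sqr v c : 0 <= c -> dot2 v v <= c * c -> norm2 v <= c.
Proof. intros. apply Rsqr_incr_0_var; unfold Rsqr; rewrite ?norm2_sqr; auto. Qed.

Lemma norm3_le_of_sqr v c : 0 <= c -> dot3 v v <= c * c -> norm3 v <= c.
Proof. intros. apply Rsqr_incr_0_var; unfold Rsqr; rewrite ?norm3_sqr; auto. Qed.

Lemma norm2_eq_of_sqr u v : dot2 u u = dot2 v v -> norm2 u = norm2 v.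
Proof. unfold norm2. intros ->. reflexivity. Qed.

Lemma norm2_sub_diag v : norm2 (sub2 v v) = 0.
Proof.
  unfold norm2. replace (dot2 (sub2 v v) (sub2 v v)) with 0 by (unfold dot2, sub2; simpl; ring).
  apply sqrt_0.
Qed.

Lemma norm2_subC u v : norm2 (sub2 u v) = norm2 (sub2 v u).
Proof. apply norm2_eq_of_sqr. unfold dot2, sub2; simpl; ring. Qed.

Lemma norm2_scal_le c v : 0 <= c -> norm2 (scal2 c v) <= c * norm2 v.
Proof.
  intros Hc. apply norm2_le_of_sqr; [pose proof (norm2_ge0 v); nra|].
  replace (c * norm2 v * (c * norm2 v)) with (c * c * (norm2 v * norm2 v)) by ring.
  rewrite norm2_sqr. unfold dot2, scal2; simpl. nra.
Qed.

Lemma dot2_CS_sqr u v : dot2 u v * dot2 u v <= dot2 u u * dot2 v v.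
Proof.
  unfold dot2. pose proof (pow2_ge_0 (wx u * wy v - wy u * wx v)). nra.
Qed.

Lemma dot3_CS_sqr u v : dot3 u v * dot3 u v <= dot3 u u * dot3 v v.
Proof.
  unfold dot3.
  pose proof (pow2_ge_0 (vx u * vy v - vy u * vx v)).
  pose proof (pow2_ge_0 (vx u * vz v - vz u * vx v)).
  pose proof (pow2_ge_0 (vy u * vz v - vz u * vy v)).
  nra.
Qed.

Lemma dot2_CS u v : Rabs (dot2 u v) <= norm2 u * norm2 v.
Proof.
  pose proof (norm2_ge0 u). pose proof (norm2_ge0 v).
  apply Rsqr_incr_0_var; [unfold Rsqr|nra].
  rewrite <- Rabs_sqr. replace (norm2 u * norm2 v * (norm2 u * norm2 v))
    with (norm2 u * norm2 u * (norm2 v * norm2 v)) by ring.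
  rewrite !norm2_sqr. apply dot2_CS_sqr.
Qed.

Lemma dot3_CS u v : Rabs (dot3 u v) <= norm3 u * norm3 v.
Proof.
  pose proof (norm3_ge0 u). pose proof (norm3_ge0 v).
  apply Rsqr_incr_0_var; [unfold Rsqr|nra].
  rewrite <- Rabs_sqr. replace (norm3 u * norm3 v * (norm3 u * norm3 v))
    with (norm3 u * norm3 u * (norm3 v * norm3 v)) by ring.
  rewrite !norm3_sqr. apply dot3_CS_sqr.
Qed.

Lemma norm2_add_le u v : norm2 (add2 u v) <= norm2 u + norm2 v.
Proof.
  pose proof (norm2_ge0 u). pose proof (norm2_ge0 v).
  pose proof (Rabs_le_bounds _ _ (dot2_CS u v)).
  apply norm2_le_of_sqr; [lra|].
  replace (dot2 (add2 u v) (add2 u v)) with (dot2 u u + 2 * dot2 u v + dot2 v v)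
    by (unfold dot2, add2; simpl; ring).
  rewrite <- (norm2_sqr u), <- (norm2_sqr v). nra.
Qed.

Lemma norm3_add_le u v : norm3 (add3 u v) <= norm3 u + norm3 v.
Proof.
  pose proof (norm3_ge0 u). pose proof (norm3_ge0 v).
  pose proof (Rabs_le_bounds _ _ (dot3_CS u v)).
  apply norm3_le_of_sqr; [lra|].
  replace (dot3 (add3 u v) (add3 u v)) with (dot3 u u + 2 * dot3 u v + dot3 v v)
    by (unfold dot3, add3; simpl; ring).
  rewrite <- (norm3_sqr u), <- (norm3_sqr v). nra.
Qed.

Lemma norm2_sub_triangle u v w : norm2 (sub2 u w) <= norm2 (sub2 u v) + norm2 (sub2 v w).
Proof.
  replace (sub2 u w) with (add2 (sub2 u v) (sub2 v w)) by (unfold add2, sub2; simpl; f_equal; ring).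
  apply norm2_add_le.
Qed.

Lemma norm2_le_add_sub u v : norm2 u <= norm2 v + norm2 (sub2 u v).
Proof.
  replace u with (add2 v (sub2 u v)) at 1 by (destruct u; unfold add2, sub2; simpl; f_equal; ring).
  apply norm2_add_le.
Qed.

Lemma norm3_sub_le u v : norm3 (sub3 u v) <= norm3 u + norm3 v.
Proof.
  replace (sub3 u v) with (add3 u (scal3 (-1) v)) by (unfold add3, sub3, scal3; simpl; f_equal; ring).
  replace (norm3 v) with (norm3 (scal3 (-1) v)) by (unfold norm3, dot3, scal3; simpl; f_equal; ring).
  apply norm3_add_le.
Qed.

Lemma dot2_perturb u u' v v' :
  dot2 u' v' - norm2 (sub2 u u') * norm2 v' - norm2 u * norm2 (sub2 v v') <= dot2 u v.
Proof.
  pose proof (Rabs_le_bounds _ _ (dot2_CS (sub2 u u') v')).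
  pose proof (Rabs_le_bounds _ _ (dot2_CS u (sub2 v v'))).
  replace (dot2 u v) with (dot2 u' v' + dot2 (sub2 u u') v' + dot2 u (sub2 v v'))
    by (unfold dot2, sub2; simpl; ring).
  lra.
Qed.

(** * Trigonometric estimates *)

Lemma sin_cos_sqr x : sin x * sin x + cos x * cos x = 1.
Proof. pose proof (sin2_cos2 x). unfold Rsqr in *. lra. Qed.

Lemma Rabs_sin_le x : Rabs (sin x) <= Rabs x.
Proof.
  assert (Hpos : forall y, 0 < y -> Rabs (sin y) <= y).
  { intros y Hy. pose proof (sin_lt_x y Hy). pose proof (SIN_bound y). pose proof PI2_1.
    destruct (Rle_dec 1 y).
    - apply Rabs_le. lra.
    - rewrite Rabs_right; [lra|]. left. apply sin_gt_0; lra. }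
  destruct (Rtotal_order x 0) as [Hx|[->|Hx]].
  - replace x with (- (- x)) by ring.
    rewrite sin_neg, Rabs_Ropp, Rabs_Ropp, (Rabs_right (- x)) by lra.
    apply Hpos. lra.
  - rewrite sin_0, Rabs_R0. lra.
  - rewrite (Rabs_right x) by lra. apply Hpos. lra.
Qed.

Lemma one_sub_cos_le x e : Rabs x <= e -> 1 - cos x <= e ^ 2 / 2.
Proof.
  intros H.
  replace x with (2 * (x / 2)) at 1 by field. rewrite cos_2a_sin.
  assert (Hs : Rabs (sin (x / 2)) <= e / 2).
  { eapply Rle_trans; [apply Rabs_sin_le|].
    unfold Rdiv. rewrite Rabs_mult, (Rabs_right (/ 2)) by lra. lra. }
  pose proof (sqr_le_of_Rabs_le _ _ Hs). nra.
Qed.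

Lemma cos_diff_le1 a b : cos a * cos b + sin a * sin b <= 1.
Proof. rewrite <- cos_minus. apply COS_bound. Qed.

(** * The maps [R], [M] and [X] *)

Lemma Rot_norm a v : norm2 (Rot a v) = norm2 v.
Proof.
  apply norm2_eq_of_sqr. pose proof (sin_cos_sqr a).
  unfold dot2, Rot; simpl. nsatz.
Qed.

Lemma Rot_sub a u v : Rot a (sub2 u v) = sub2 (Rot a u) (Rot a v).
Proof. unfold Rot, sub2; simpl; f_equal; ring. Qed.

Lemma Rot_lipschitz a a' e v : Rabs (a - a') <= e ->
  norm2 (sub2 (Rot a v) (Rot a' v)) <= e * norm2 v.
Proof.
  intros H. pose proof (Rabs_pos (a - a')). pose proof (norm2_ge0 v).
  apply norm2_le_of_sqr; [nra|].
  pose proof (one_sub_cos_le _ _ H) as Hc. rewrite cos_minus in Hc.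
  replace (dot2 (sub2 (Rot a v) (Rot a' v)) (sub2 (Rot a v) (Rot a' v)))
    with (2 * (1 - (cos a * cos a' + sin a * sin a')) * (norm2 v * norm2 v)).
  - pose proof (cos_diff_le1 a a'). nra.
  - rewrite norm2_sqr. pose proof (sin_cos_sqr a). pose proof (sin_cos_sqr a').
    unfold dot2, Rot, sub2; simpl. nsatz.
Qed.

Lemma Xv_unit t f : dot3 (Xv t f) (Xv t f) = 1.
Proof.
  pose proof (sin_cos_sqr t). pose proof (sin_cos_sqr f).
  unfold dot3, Xv; simpl. nsatz.
Qed.

(* [M(t,f)] and [X(t,f)] are the rows of a rotation matrix. *)
Lemma Mm_dot_Xv_dot t f u v :
  dot2 (Mm t f u) (Mm t f v) + dot3 (Xv t f) u * dot3 (Xv t f) v = dot3 u v.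
Proof.
  pose proof (sin_cos_sqr t). pose proof (sin_cos_sqr f).
  unfold dot2, dot3, Mm, Xv; simpl. nsatz.
Qed.

Lemma Mm_norm_le t f v : norm2 (Mm t f v) <= norm3 v.
Proof.
  apply norm2_le_of_sqr; [apply norm3_ge0|]. rewrite norm3_sqr.
  rewrite <- (Mm_dot_Xv_dot t f v v). pose proof (pow2_ge_0 (dot3 (Xv t f) v)). nra.
Qed.

Lemma Mm_sub t f u v : Mm t f (sub3 u v) = sub2 (Mm t f u) (Mm t f v).
Proof. unfold Mm, sub2, sub3; simpl; f_equal; ring. Qed.

Lemma Xv_lipschitz t f t' f' e : Rabs (t - t') <= e -> Rabs (f - f') <= e ->
  norm3 (sub3 (Xv t f) (Xv t' f')) <= sqrt 2 * e.
Proof.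
  intros Ht Hf. pose proof (Rabs_pos (t - t')). pose proof (proj1 sqrt2_bounds).
  apply norm3_le_of_sqr; [nra|].
  pose proof (one_sub_cos_le _ _ Ht) as Hx. rewrite cos_minus in Hx.
  pose proof (one_sub_cos_le _ _ Hf) as Hy. rewrite cos_minus in Hy.
  replace (dot3 (sub3 (Xv t f) (Xv t' f')) (sub3 (Xv t f) (Xv t' f')))
    with (2 * (1 - (cos f * cos f' + sin f * sin f'))
          + 2 * (sin f * sin f') * (1 - (cos t * cos t' + sin t * sin t'))).
  - replace (sqrt 2 * e * (sqrt 2 * e)) with (sqrt 2 * sqrt 2 * e * e) by ring.
    rewrite sqrt2_sqr.
    pose proof (cos_diff_le1 t t'). pose proof (SIN_bound f). pose proof (SIN_bound f').
    assert (sin f * sin f' <= 1) by nra. nra.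
  - pose proof (sin_cos_sqr t). pose proof (sin_cos_sqr t').
    pose proof (sin_cos_sqr f). pose proof (sin_cos_sqr f').
    unfold dot3, sub3, Xv; simpl. nsatz.
Qed.

Lemma quad_form_le g11 g12 g22 c z1 z2 :
  g11 <= c -> g22 <= c -> g12 * g12 <= (c - g11) * (c - g22) ->
  z1 * z1 * g11 + 2 * z1 * z2 * g12 + z2 * z2 * g22 <= c * (z1 * z1 + z2 * z2).
Proof.
  intros H11 H22 Hdet.
  destruct (Req_dec g11 c) as [E|E].
  - assert (g12 = 0) by nra. subst. nra.
  - assert (Hsq : (c - g11) * (c * (z1 * z1 + z2 * z2) - (z1 * z1 * g11 + 2 * z1 * z2 * g12 + z2 * z2 * g22))
                  = ((c - g11) * z1 - g12 * z2) ^ 2 + ((c - g11) * (c - g22) - g12 * g12) * (z2 * z2))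
      by ring.
    pose proof (pow2_ge_0 ((c - g11) * z1 - g12 * z2)).
    assert (0 <= ((c - g11) * (c - g22) - g12 * g12) * (z2 * z2)) by (apply Rmult_le_pos; nra).
    nra.
Qed.

(* Test the Gram bound on [g = (a1.v) a1 + (a2.v) a2], then use [(g.v)^2 <= |g|^2 |v|^2]. *)
Lemma dot_pair_sqr_le a1 a2 v c :
  dot3 a1 a1 <= c -> dot3 a2 a2 <= c ->
  dot3 a1 a2 * dot3 a1 a2 <= (c - dot3 a1 a1) * (c - dot3 a2 a2) ->
  dot3 a1 v * dot3 a1 v + dot3 a2 v * dot3 a2 v <= c * dot3 v v.
Proof.
  intros H11 H22 Hdet.
  set (z1 := dot3 a1 v). set (z2 := dot3 a2 v).
  set (g := add3 (scal3 z1 a1) (scal3 z2 a2)).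
  assert (Hgg : dot3 g g <= c * (z1 * z1 + z2 * z2)).
  { replace (dot3 g g) with
      (z1 * z1 * dot3 a1 a1 + 2 * z1 * z2 * dot3 a1 a2 + z2 * z2 * dot3 a2 a2)
      by (unfold g, dot3, add3, scal3; simpl; ring).
    apply quad_form_le; auto. }
  assert (Hgv : dot3 g v = z1 * z1 + z2 * z2) by (unfold g, z1, z2, dot3, add3, scal3; simpl; ring).
  pose proof (dot3_CS_sqr g v) as HCS. rewrite Hgv in HCS.
  pose proof (dot3_ge0 v).
  destruct (Req_dec (z1 * z1 + z2 * z2) 0) as [Z|Z].
  - rewrite Z. assert (0 <= c) by (pose proof (dot3_ge0 a1); lra). nra.
  - assert (0 < z1 * z1 + z2 * z2) by nra.
    apply Rmult_le_reg_l with (z1 * z1 + z2 * z2); auto. nra.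
Qed.

Lemma gram_det_ineq e x y s :
  0 <= x <= e ^ 2 / 2 -> 0 <= y <= e ^ 2 / 2 -> 0 <= s ->
  s * y * (x * (2 - x)) <= (2 * e ^ 2 - 2 * x) * (2 * e ^ 2 - 2 * y - (2 - y - s) * x).
Proof.
  intros Hx Hy Hs.
  assert (E : (2 * e ^ 2 - 2 * x) * (2 * e ^ 2 - 2 * y - (2 - y - s) * x) - s * y * (x * (2 - x))
              = 4 * (e ^ 2 - x) * ((e ^ 2 - x - y) + x * y / 2) + 2 * s * x * (e ^ 2 - x - y)
                + s * y * (x * x)) by field.
  assert (0 <= x * y) by nra.
  assert (0 <= (e ^ 2 - x) * ((e ^ 2 - x - y) + x * y / 2)) by (apply Rmult_le_pos; lra).
  assert (0 <= s * x * (e ^ 2 - x - y)) by (apply Rmult_le_pos; [apply Rmult_le_pos|]; lra).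
  assert (0 <= s * y * (x * x)) by (apply Rmult_le_pos; [apply Rmult_le_pos|]; nra).
  lra.
Qed.

Lemma Mm_lipschitz t f t' f' e v : Rabs (t - t') <= e -> Rabs (f - f') <= e ->
  norm2 (sub2 (Mm t f v) (Mm t' f' v)) <= sqrt 2 * e * norm3 v.
Proof.
  intros Ht Hf. pose proof (Rabs_pos (t - t')). pose proof (proj1 sqrt2_bounds).
  pose proof (norm3_ge0 v).
  apply norm2_le_of_sqr; [apply Rmult_le_pos; nra|].
  replace (sqrt 2 * e * norm3 v * (sqrt 2 * e * norm3 v))
    with (sqrt 2 * sqrt 2 * e * e * (norm3 v * norm3 v)) by ring.
  rewrite sqrt2_sqr, norm3_sqr.
  set (a1 := mkV3 (- sin t + sin t') (cos t - cos t') 0).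
  set (a2 := mkV3 (- cos t * cos f + cos t' * cos f') (- sin t * cos f + sin t' * cos f')
                  (sin f - sin f')).
  replace (dot2 (sub2 (Mm t f v) (Mm t' f' v)) (sub2 (Mm t f v) (Mm t' f' v)))
    with (dot3 a1 v * dot3 a1 v + dot3 a2 v * dot3 a2 v)
    by (unfold a1, a2, dot2, dot3, sub2, Mm; simpl; ring).
  set (x := 1 - cos (t - t')). set (y := 1 - cos (f - f')). set (s := 1 - cos (f + f')).
  pose proof (sin_cos_sqr t). pose proof (sin_cos_sqr t').
  pose proof (sin_cos_sqr f). pose proof (sin_cos_sqr f').
  assert (G11 : dot3 a1 a1 = 2 * x)
    by (unfold x, a1, dot3; rewrite cos_minus; simpl; nsatz).
  assert (G22 : dot3 a2 a2 = 2 * y + (2 - y - s) * x)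
    by (unfold x, y, s, a2, dot3; rewrite !cos_minus, cos_plus; simpl; nsatz).
  assert (G12 : dot3 a1 a2 * dot3 a1 a2 = s * y * (x * (2 - x)))
    by (unfold x, y, s, a1, a2, dot3; rewrite !cos_minus, cos_plus; simpl; nsatz).
  assert (Hx : 0 <= x <= e ^ 2 / 2) by (split; [unfold x; pose proof (COS_bound (t - t')); lra|
                                               apply one_sub_cos_le; auto]).
  assert (Hy : 0 <= y <= e ^ 2 / 2) by (split; [unfold y; pose proof (COS_bound (f - f')); lra|
                                               apply one_sub_cos_le; auto]).
  assert (Hs : 0 <= s) by (unfold s; pose proof (COS_bound (f + f')); lra).
  apply dot_pair_sqr_le; rewrite ?G11, ?G22, ?G12.
  - nra.
  - nra.
  - pose proof (gram_det_ineq e x y s Hx Hy Hs). nra.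
Qed.

(** * Convex hulls and cones in the plane *)

(* [x] lies in the cone with apex [z], axis [-z] and half-angle [arccos (k / |z|)]. *)
Definition in_cone (z : V2) (k : R) (x : V2) : Prop :=
  k * norm2 (sub2 z x) <= dot2 z (sub2 z x).

(* Stated for an arbitrary total weight [wsum l] so that the induction goes through. *)
Lemma lincomb2_in_cone z k (S : V2 -> Prop) l : 0 <= k ->
  (forall x, S x -> in_cone z k x) ->
  Forall (fun cq => 0 <= fst cq /\ S (snd cq)) l ->
  k * norm2 (sub2 (scal2 (wsum l) z) (lincomb2 l))
    <= dot2 z (sub2 (scal2 (wsum l) z) (lincomb2 l)).
Proof.
  intros Hk HS HF. induction HF as [|[c x] l [Hc Hx] HF IH]; simpl in *.
  - replace (sub2 (scal2 0 z) zero2) with (sub2 z z) by (unfold sub2, scal2, zero2; simpl; f_equal; ring).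
    rewrite norm2_sub_diag. unfold dot2, sub2; simpl. lra.
  - set (A := sub2 (scal2 (wsum l) z) (lincomb2 l)) in *.
    replace (sub2 (scal2 (c + wsum l) z) (add2 (scal2 c x) (lincomb2 l)))
      with (add2 (scal2 c (sub2 z x)) A) by (unfold A, sub2, scal2, add2; simpl; f_equal; ring).
    replace (dot2 z (add2 (scal2 c (sub2 z x)) A)) with (c * dot2 z (sub2 z x) + dot2 z A)
      by (unfold dot2, sub2, scal2, add2; simpl; ring).
    pose proof (norm2_add_le (scal2 c (sub2 z x)) A).
    pose proof (norm2_scal_le c (sub2 z x) Hc).
    pose proof (HS x Hx). unfold in_cone in *.
    assert (0 <= c * (dot2 z (sub2 z x) - k * norm2 (sub2 z x))) by (apply Rmult_le_pos; lra).
    nra.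
Qed.

Lemma conv2_in_cone z k (S : V2 -> Prop) y : 0 <= k ->
  (forall x, S x -> in_cone z k x) -> conv2 S y -> in_cone z k y.
Proof.
  intros Hk HS [l [HF [Hw Hy]]].
  pose proof (lincomb2_in_cone z k S l Hk HS HF) as H. rewrite Hw in H.
  unfold in_cone. subst y.
  replace (sub2 z (lincomb2 l)) with (sub2 (scal2 1 z) (lincomb2 l))
    by (unfold sub2, scal2; simpl; f_equal; ring).
  exact H.
Qed.

(* [y] and [y + s z] both lie in the cone: the first bounds [|y|^2 = |z|^2 - 2 z.(z-y) + |z-y|^2],
   the second makes [z.(z-y)] positive. *)
Lemma interior_conv2_norm_lt z y k (S : V2 -> Prop) : 0 <= k -> 0 < norm2 z ->
  (forall x, S x -> in_cone z (k * norm2 z) x) ->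
  interior2 (conv2 S) y -> norm2 (sub2 z y) < 2 * k * norm2 z ->
  norm2 y < norm2 z.
Proof.
  intros Hk Hz HS [rho [Hrho Hint]] Hd.
  set (m := k * norm2 z) in *.
  assert (Hm : 0 <= m) by (unfold m; apply Rmult_le_pos; lra).
  assert (Hdm : norm2 (sub2 z y) < 2 * m) by (unfold m; lra).
  set (s := rho / (2 * (norm2 z + 1))).
  assert (Hs : 0 < s) by (unfold s; apply Rdiv_lt_0_compat; lra).
  assert (Hsz : s * norm2 z < rho).
  { unfold s. apply Rmult_lt_reg_r with (2 * (norm2 z + 1)); [lra|].
    field_simplify; nra. }
  assert (Cy : in_cone z m y).
  { apply (conv2_in_cone z m S); auto. apply Hint. rewrite norm2_sub_diag. lra. }
  assert (Cys : in_cone z m (add2 y (scal2 s z))).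
  { apply (conv2_in_cone z m S); auto. apply Hint.
    replace (sub2 (add2 y (scal2 s z)) y) with (scal2 s z)
      by (unfold sub2, add2, scal2; simpl; f_equal; ring).
    pose proof (norm2_scal_le s z). lra. }
  unfold in_cone in Cy, Cys.
  replace (dot2 z (sub2 z (add2 y (scal2 s z)))) with (dot2 z (sub2 z y) - s * (norm2 z * norm2 z))
    in Cys by (rewrite norm2_sqr; unfold dot2, sub2, add2, scal2; simpl; ring).
  pose proof (norm2_ge0 (sub2 z (add2 y (scal2 s z)))).
  assert (0 < s * (norm2 z * norm2 z)) by (apply Rmult_lt_0_compat; nra).
  assert (Hpos : 0 < dot2 z (sub2 z y)) by nra.
  assert (Ey : norm2 y * norm2 y
               = norm2 z * norm2 z - 2 * dot2 z (sub2 z y) + norm2 (sub2 z y) * norm2 (sub2 z y))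
    by (rewrite !norm2_sqr; unfold dot2, sub2; simpl; ring).
  pose proof (norm2_ge0 (sub2 z y)). pose proof (norm2_ge0 y).
  assert (norm2 y * norm2 y < norm2 z * norm2 z).
  { destruct (Req_dec (norm2 (sub2 z y)) 0) as [D|D]; rewrite Ey.
    - rewrite D. lra.
    - assert (norm2 (sub2 z y) * (norm2 (sub2 z y) - 2 * m) < 0) by (apply Rmult_pos_neg; lra).
      nra. }
  nra.
Qed.

(** * Winding triangles and dominating directions *)

Definition cross (a b : V2) : R := dot2 (Rot (PI / 2) a) b.

Lemma cross_eq a b : cross a b = wx a * wy b - wy a * wx b.
Proof. unfold cross, Rot, dot2; simpl. rewrite cos_PI2, sin_PI2. ring. Qed.

Lemma cross_bound a b : Rabs (cross a b) <= norm2 a * norm2 b.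
Proof. unfold cross. rewrite <- (Rot_norm (PI / 2) a). apply dot2_CS. Qed.

Lemma cross_perturb u u' v v' :
  cross u' v' - norm2 (sub2 u u') * norm2 v' - norm2 u * norm2 (sub2 v v') <= cross u v.
Proof.
  pose proof (Rabs_le_bounds _ _ (cross_bound (sub2 u u') v')).
  pose proof (Rabs_le_bounds _ _ (cross_bound u (sub2 v v'))).
  replace (cross u v) with (cross u' v' + cross (sub2 u u') v' + cross u (sub2 v v'))
    by (rewrite !cross_eq; unfold sub2; simpl; ring).
  lra.
Qed.

Lemma winding_not_in_halfplane z q0 q1 q2 :
  cross q0 q1 > 0 -> cross q1 q2 > 0 -> cross q2 q0 > 0 ->
  dot2 z q0 > 0 -> dot2 z q1 > 0 -> dot2 z q2 > 0 -> False.
Proof.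
  intros C01 C12 C20 D0 D1 D2.
  assert (E : cross q0 q1 * dot2 z q2 + cross q1 q2 * dot2 z q0 + cross q2 q0 * dot2 z q1 = 0)
    by (rewrite !cross_eq; unfold dot2; ring).
  assert (0 < cross q0 q1 * dot2 z q2) by (apply Rmult_lt_0_compat; lra).
  assert (0 < cross q1 q2 * dot2 z q0) by (apply Rmult_lt_0_compat; lra).
  assert (0 < cross q2 q0 * dot2 z q1) by (apply Rmult_lt_0_compat; lra).
  lra.
Qed.

Lemma Mm_dot_of_orth t f u q : dot3 (Xv t f) u = 0 -> dot2 (Mm t f u) (Mm t f q) = dot3 u q.
Proof. intros H. rewrite <- (Mm_dot_Xv_dot t f u q), H. ring. Qed.

Lemma orth_proj_orth w v : dot3 v v = 1 -> dot3 v (sub3 w (scal3 (dot3 w v) v)) = 0.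
Proof.
  intros Hv. replace (dot3 v (sub3 w (scal3 (dot3 w v) v))) with (dot3 w v * (1 - dot3 v v))
    by (unfold dot3, sub3, scal3; simpl; ring).
  rewrite Hv. ring.
Qed.

Lemma orth_proj_dot_pos w v q : dot3 v v = 1 -> dot3 w w <= 1 ->
  0 < dot3 v q < dot3 w q -> dot3 (sub3 w (scal3 (dot3 w v) v)) q > 0.
Proof.
  intros Hv Hw [Hvq Hwq].
  assert (Hc : dot3 w v <= 1) by (pose proof (dot3_CS_sqr w v); rewrite Hv in *; nra).
  replace (dot3 (sub3 w (scal3 (dot3 w v) v)) q) with (dot3 w q - dot3 w v * dot3 v q)
    by (unfold dot3, sub3, scal3; simpl; ring).
  nra.
Qed.

(* Project [w] orthogonally to [s X], then by [M]: the result has positive inner product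
   with the three winding vectors [M Q_i]. *)
Lemma no_dominating_vector t f (w : V3) (s : R) (Q : nat -> V3) :
  s * s = 1 -> dot3 w w <= 1 ->
  (forall i, (i < 3)%nat -> 0 < s * dot3 (Xv t f) (Q i) < dot3 w (Q i)) ->
  cross (Mm t f (Q 0%nat)) (Mm t f (Q 1%nat)) > 0 ->
  cross (Mm t f (Q 1%nat)) (Mm t f (Q 2%nat)) > 0 ->
  cross (Mm t f (Q 2%nat)) (Mm t f (Q 0%nat)) > 0 -> False.
Proof.
  intros Hs Hw HQ C01 C12 C20.
  set (v := scal3 s (Xv t f)).
  assert (Hv : dot3 v v = 1).
  { unfold v. replace (dot3 (scal3 s (Xv t f)) (scal3 s (Xv t f))) with
      (s * s * dot3 (Xv t f) (Xv t f)) by (unfold dot3, scal3; simpl; ring).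
    rewrite Hs, Xv_unit. ring. }
  set (u := sub3 w (scal3 (dot3 w v) v)).
  assert (HXu : dot3 (Xv t f) u = 0).
  { assert (Hvu : dot3 v u = 0) by (apply orth_proj_orth, Hv).
    replace (dot3 v u) with (s * dot3 (Xv t f) u) in Hvu by (unfold v, dot3, scal3; simpl; ring).
    rewrite <- (Rmult_1_l (dot3 (Xv t f) u)), <- Hs, Rmult_assoc, Hvu. ring. }
  assert (Hpos : forall i, (i < 3)%nat -> dot2 (Mm t f u) (Mm t f (Q i)) > 0).
  { intros i Hi. rewrite Mm_dot_of_orth by exact HXu.
    apply orth_proj_dot_pos; auto.
    replace (dot3 v (Q i)) with (s * dot3 (Xv t f) (Q i)) by (unfold v, dot3, scal3; simpl; ring).
    auto. }
  apply (winding_not_in_halfplane (Mm t f u) (Mm t f (Q 0%nat)) (Mm t f (Q 1%nat)) (Mm t f (Q 2%nat)));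
    auto.
Qed.

(** * Congruent triples *)

Definition applyLT (c1 c2 c3 x : V3) : V3 := mkV3 (dot3 c1 x) (dot3 c2 x) (dot3 c3 x).

Lemma applyLT_dot c1 c2 c3 x q : dot3 (applyLT c1 c2 c3 x) q = dot3 x (applyL c1 c2 c3 q).
Proof. unfold applyLT, applyL, dot3, add3, scal3; simpl. ring. Qed.

Lemma applyL_isometry c1 c2 c3 q : orthonormal3 c1 c2 c3 ->
  dot3 (applyL c1 c2 c3 q) (applyL c1 c2 c3 q) = dot3 q q.
Proof.
  intros (H11 & H22 & H33 & H12 & H13 & H23).
  replace (dot3 (applyL c1 c2 c3 q) (applyL c1 c2 c3 q)) with
    (vx q * vx q * dot3 c1 c1 + vy q * vy q * dot3 c2 c2 + vz q * vz q * dot3 c3 c3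
     + 2 * vx q * vy q * dot3 c1 c2 + 2 * vx q * vz q * dot3 c1 c3 + 2 * vy q * vz q * dot3 c2 c3)
    by (unfold dot3, applyL, add3, scal3; simpl; ring).
  rewrite H11, H22, H33, H12, H13, H23. unfold dot3. ring.
Qed.

Lemma applyLT_contraction c1 c2 c3 x : orthonormal3 c1 c2 c3 ->
  dot3 (applyLT c1 c2 c3 x) (applyLT c1 c2 c3 x) <= dot3 x x.
Proof.
  intros Hon.
  set (y := applyLT c1 c2 c3 x).
  assert (E : dot3 (sub3 x (applyL c1 c2 c3 y)) (sub3 x (applyL c1 c2 c3 y))
              = dot3 x x - 2 * dot3 x (applyL c1 c2 c3 y)
                + dot3 (applyL c1 c2 c3 y) (applyL c1 c2 c3 y))
    by (unfold dot3, sub3; simpl; ring).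
  rewrite <- applyLT_dot, applyL_isometry in E by exact Hon. fold y in E.
  pose proof (dot3_ge0 (sub3 x (applyL c1 c2 c3 y))). lra.
Qed.

Lemma congruent_dot3_sqr (P Q : nat -> V3) : congruent P Q ->
  forall i, (i < 3)%nat -> dot3 (P i) (P i) = dot3 (Q i) (Q i).
Proof.
  intros [c1 [c2 [c3 [Hon HPQ]]]] i Hi. rewrite (HPQ i Hi). apply applyL_isometry, Hon.
Qed.

Lemma congruent_heights_not_dominated (P Q : nat -> V3) t1 f1 t2 f2 s1 s2 :
  congruent P Q -> s1 * s1 = 1 -> s2 * s2 = 1 ->
  (forall i, (i < 3)%nat -> 0 < s2 * dot3 (Xv t2 f2) (Q i) < s1 * dot3 (Xv t1 f1) (P i)) ->
  cross (Mm t2 f2 (Q 0%nat)) (Mm t2 f2 (Q 1%nat)) > 0 ->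
  cross (Mm t2 f2 (Q 1%nat)) (Mm t2 f2 (Q 2%nat)) > 0 ->
  cross (Mm t2 f2 (Q 2%nat)) (Mm t2 f2 (Q 0%nat)) > 0 -> False.
Proof.
  intros [c1 [c2 [c3 [Hon HPQ]]]] Hs1 Hs2 Hh.
  apply (no_dominating_vector t2 f2 (scal3 s1 (applyLT c1 c2 c3 (Xv t1 f1))) s2 Q Hs2).
  - replace (dot3 (scal3 s1 (applyLT c1 c2 c3 (Xv t1 f1))) (scal3 s1 (applyLT c1 c2 c3 (Xv t1 f1))))
      with (s1 * s1 * dot3 (applyLT c1 c2 c3 (Xv t1 f1)) (applyLT c1 c2 c3 (Xv t1 f1)))
      by (unfold dot3, scal3; simpl; ring).
    rewrite Hs1, Rmult_1_l, <- (Xv_unit t1 f1). apply applyLT_contraction, Hon.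
  - intros i Hi.
    replace (dot3 (scal3 s1 (applyLT c1 c2 c3 (Xv t1 f1))) (Q i))
      with (s1 * dot3 (applyLT c1 c2 c3 (Xv t1 f1)) (Q i)) by (unfold dot3, scal3; simpl; ring).
    rewrite applyLT_dot, <- (HPQ i Hi). apply Hh, Hi.
Qed.

(** * Perturbation of the parameters *)

Lemma Mm_perturb t f th ph e p : Rabs (t - th) <= e -> Rabs (f - ph) <= e -> norm3 p <= 1 ->
  norm2 (sub2 (Mm t f p) (Mm th ph p)) <= sqrt 2 * e.
Proof.
  intros Ht Hf Hp. pose proof (Rabs_pos (t - th)). pose proof (proj1 sqrt2_bounds).
  eapply Rle_trans; [apply Mm_lipschitz; eauto|].
  assert (0 <= sqrt 2 * e) by nra. pose proof (norm3_ge0 p). nra.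
Qed.

Lemma height_perturb t f th ph e s p : s * s = 1 ->
  Rabs (t - th) <= e -> Rabs (f - ph) <= e -> norm3 p <= 1 ->
  s * dot3 (Xv th ph) p > sqrt 2 * e -> 0 < s * dot3 (Xv t f) p.
Proof.
  intros Hs Ht Hf Hp Hh.
  pose proof (Xv_lipschitz t f th ph e Ht Hf).
  pose proof (Rabs_le_bounds _ _ (dot3_CS (sub3 (Xv t f) (Xv th ph)) p)).
  pose proof (norm3_ge0 p). pose proof (norm3_ge0 (sub3 (Xv t f) (Xv th ph))).
  replace (dot3 (Xv t f) p) with (dot3 (Xv th ph) p + dot3 (sub3 (Xv t f) (Xv th ph)) p)
    by (unfold dot3, sub3; simpl; ring).
  destruct (sign_cases s Hs) as [-> | ->]; nra.
Qed.

(* [|M p|^2 + <X, p>^2 = |p|^2]: a shorter shadow means a higher point. *)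
Lemma height_gt_of_shadow_lt t1 f1 t2 f2 p q s1 s2 : s1 * s1 = 1 -> s2 * s2 = 1 ->
  dot3 p p = dot3 q q -> norm2 (Mm t1 f1 p) < norm2 (Mm t2 f2 q) ->
  0 < s1 * dot3 (Xv t1 f1) p -> 0 < s2 * dot3 (Xv t2 f2) q ->
  s2 * dot3 (Xv t2 f2) q < s1 * dot3 (Xv t1 f1) p.
Proof.
  intros Hs1 Hs2 Hpq Hshadow H1 H2.
  pose proof (Mm_dot_Xv_dot t1 f1 p p) as E1. pose proof (Mm_dot_Xv_dot t2 f2 q q) as E2.
  rewrite <- !norm2_sqr in E1, E2. pose proof (norm2_ge0 (Mm t1 f1 p)).
  assert (Hsq : (s2 * dot3 (Xv t2 f2) q) * (s2 * dot3 (Xv t2 f2) q)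
                < (s1 * dot3 (Xv t1 f1) p) * (s1 * dot3 (Xv t1 f1) p)).
  { replace ((s1 * dot3 (Xv t1 f1) p) * (s1 * dot3 (Xv t1 f1) p))
      with (s1 * s1 * (dot3 (Xv t1 f1) p * dot3 (Xv t1 f1) p)) by ring.
    replace ((s2 * dot3 (Xv t2 f2) q) * (s2 * dot3 (Xv t2 f2) q))
      with (s2 * s2 * (dot3 (Xv t2 f2) q * dot3 (Xv t2 f2) q)) by ring.
    rewrite Hs1, Hs2. nra. }
  nra.
Qed.

Lemma cross_Mm_perturb t f th ph e p q : 0 <= e ->
  Rabs (t - th) <= e -> Rabs (f - ph) <= e -> norm3 p <= 1 -> norm3 q <= 1 ->
  cross (Mm th ph p) (Mm th ph q) > 2 * e * (sqrt 2 + e) -> cross (Mm t f p) (Mm t f q) > 0.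
Proof.
  intros He Ht Hf Hp Hq Hc.
  pose proof (cross_perturb (Mm t f p) (Mm th ph p) (Mm t f q) (Mm th ph q)).
  pose proof (Mm_perturb t f th ph e p Ht Hf Hp). pose proof (Mm_perturb t f th ph e q Ht Hf Hq).
  pose proof (Mm_norm_le th ph q). pose proof (Mm_norm_le t f p).
  pose proof (norm2_ge0 (Mm th ph q)). pose proof (norm2_ge0 (Mm t f p)).
  pose proof (norm2_ge0 (sub2 (Mm t f p) (Mm th ph p))).
  pose proof (norm2_ge0 (sub2 (Mm t f q) (Mm th ph q))).
  assert (norm2 (sub2 (Mm t f p) (Mm th ph p)) * norm2 (Mm th ph q) <= sqrt 2 * e)
    by (apply Rle_trans with (sqrt 2 * e * 1); [apply Rmult_le_compat|]; lra).
  assert (norm2 (Mm t f p) * norm2 (sub2 (Mm t f q) (Mm th ph q)) <= sqrt 2 * e)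
    by (apply Rle_trans with (1 * (sqrt 2 * e)); [apply Rmult_le_compat|]; lra).
  nra.
Qed.

(* The ratio of (B) bounds the cosine of the angle at [M q] from below, uniformly in the
   perturbation of [M]. *)
Lemma local_max_in_cone t f th ph e k q q' : 0 < e -> 0 <= k ->
  Rabs (t - th) <= e -> Rabs (f - ph) <= e -> norm3 q <= 1 -> norm3 q' <= 1 ->
  (dot2 (Mm th ph q) (Mm th ph (sub3 q q')) - 2 * e * norm3 (sub3 q q') * (sqrt 2 + e))
    / ((norm2 (Mm th ph q) + sqrt 2 * e) * (norm2 (Mm th ph (sub3 q q')) + 2 * sqrt 2 * e)) > k ->
  in_cone (Mm t f q) (k * norm2 (Mm t f q)) (Mm t f q').
Proof.
  intros He Hk Ht Hf Hq Hq' Hratio. pose proof sqrt2_bounds as S2.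
  unfold in_cone. rewrite <- Mm_sub.
  set (D := sub3 q q') in *.
  assert (HD : norm3 D <= 2) by (pose proof (norm3_sub_le q q'); unfold D; lra).
  pose proof (norm3_ge0 D).
  set (z := Mm t f q) in *. set (zb := Mm th ph q) in *.
  set (b := Mm t f D) in *. set (bb := Mm th ph D) in *.
  assert (Hz : norm2 (sub2 z zb) <= sqrt 2 * e) by (apply Mm_perturb; auto).
  assert (Hb : norm2 (sub2 b bb) <= sqrt 2 * e * norm3 D) by (apply Mm_lipschitz; auto).
  assert (Hbb : norm2 bb <= norm3 D) by apply Mm_norm_le.
  assert (Hz1 : norm2 z <= 1) by (eapply Rle_trans; [apply Mm_norm_le|]; auto).
  pose proof (norm2_ge0 zb). pose proof (norm2_ge0 bb). pose proof (norm2_ge0 b).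
  pose proof (norm2_ge0 z). pose proof (norm2_ge0 (sub2 z zb)). pose proof (norm2_ge0 (sub2 b bb)).
  set (den := (norm2 zb + sqrt 2 * e) * (norm2 bb + 2 * sqrt 2 * e)) in *.
  assert (Hden : 0 < den) by (unfold den; apply Rmult_lt_0_compat; nra).
  set (num := dot2 zb bb - 2 * e * norm3 D * (sqrt 2 + e)) in *.
  assert (Hnum : k * den < num).
  { replace num with (num / den * den) by (field; lra). apply Rmult_lt_compat_r; lra. }
  assert (Hzb : norm2 z * norm2 b <= den).
  { unfold den. apply Rmult_le_compat; try lra.
    - pose proof (norm2_le_add_sub z zb). lra.
    - pose proof (norm2_le_add_sub b bb). nra. }
  pose proof (dot2_perturb z zb b bb).
  assert (norm2 (sub2 z zb) * norm2 bb <= sqrt 2 * e * norm3 D) by (apply Rmult_le_compat; lra).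
  assert (norm2 z * norm2 (sub2 b bb) <= sqrt 2 * e * norm3 D)
    by (apply Rle_trans with (1 * (sqrt 2 * e * norm3 D)); [apply Rmult_le_compat|]; nra).
  assert (k * (norm2 z * norm2 b) <= k * den) by (apply Rmult_le_compat_l; lra).
  assert (0 <= e * e * norm3 D) by (apply Rmult_le_pos; nra).
  unfold num in Hnum. nra.
Qed.

Lemma rotated_shadow_dist t1 f1 t2 f2 a th1 ph1 th2 ph2 al e p q : 0 <= e ->
  Rabs (t1 - th1) <= e -> Rabs (f1 - ph1) <= e ->
  Rabs (t2 - th2) <= e -> Rabs (f2 - ph2) <= e -> Rabs (a - al) <= e ->
  norm3 p <= 1 -> norm3 q <= 1 ->
  norm2 (sub2 (Mm t2 f2 q) (Rot a (Mm t1 f1 p)))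
    <= norm2 (sub2 (Rot al (Mm th1 ph1 p)) (Mm th2 ph2 q)) + (2 * sqrt 2 + 1) * e.
Proof.
  intros He Ht1 Hf1 Ht2 Hf2 Ha Hp Hq.
  pose proof (Mm_perturb t2 f2 th2 ph2 e q Ht2 Hf2 Hq).
  assert (norm2 (sub2 (Rot al (Mm th1 ph1 p)) (Rot a (Mm th1 ph1 p))) <= e).
  { eapply Rle_trans; [apply Rot_lipschitz; rewrite Rabs_minus_sym; exact Ha|].
    pose proof (Mm_norm_le th1 ph1 p). nra. }
  assert (norm2 (sub2 (Rot a (Mm th1 ph1 p)) (Rot a (Mm t1 f1 p))) <= sqrt 2 * e).
  { rewrite <- Rot_sub, Rot_norm, norm2_subC. apply Mm_perturb; auto. }
  pose proof (norm2_sub_triangle (Mm t2 f2 q) (Mm th2 ph2 q) (Rot a (Mm t1 f1 p))).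
  pose proof (norm2_sub_triangle (Mm th2 ph2 q) (Rot al (Mm th1 ph1 p)) (Rot a (Mm t1 f1 p))).
  pose proof (norm2_sub_triangle (Rot al (Mm th1 ph1 p)) (Rot a (Mm th1 ph1 p)) (Rot a (Mm t1 f1 p))).
  rewrite (norm2_subC (Mm th2 ph2 q) (Rot al (Mm th1 ph1 p))) in *.
  lra.
Qed.

Lemma shadow_norm_lt (Pl : list V3) p q eps th1 ph1 th2 ph2 al r delta t1 f1 t2 f2 a :
  (forall x, In x Pl -> norm3 x <= 1) -> In p Pl -> In q Pl -> 0 < eps -> 0 < r ->
  Rabs (t1 - th1) <= eps -> Rabs (f1 - ph1) <= eps ->
  Rabs (t2 - th2) <= eps -> Rabs (f2 - ph2) <= eps -> Rabs (a - al) <= eps ->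
  norm2 (Mm th2 ph2 q) > r + sqrt 2 * eps ->
  delta >= norm2 (sub2 (Rot al (Mm th1 ph1 p)) (Mm th2 ph2 q)) / 2 ->
  (forall q', In q' Pl -> q' <> q ->
     (dot2 (Mm th2 ph2 q) (Mm th2 ph2 (sub3 q q')) - 2 * eps * norm3 (sub3 q q') * (sqrt 2 + eps))
     / ((norm2 (Mm th2 ph2 q) + sqrt 2 * eps) * (norm2 (Mm th2 ph2 (sub3 q q')) + 2 * sqrt 2 * eps))
     > (sqrt 5 * eps + delta) / r) ->
  interior2 (conv2 (fun y => exists x, In x Pl /\ y = Mm t2 f2 x)) (Rot a (Mm t1 f1 p)) ->
  norm2 (Mm t1 f1 p) < norm2 (Mm t2 f2 q).
Proof.
  intros Hn Hp Hq He Hr Ht1 Hf1 Ht2 Hf2 Ha Hzb Hdelta Hratio Hint.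
  pose proof sqrt2_bounds. pose proof sqrt5_ge.
  set (k := (sqrt 5 * eps + delta) / r).
  assert (Hdelta0 : 0 <= delta)
    by (pose proof (norm2_ge0 (sub2 (Rot al (Mm th1 ph1 p)) (Mm th2 ph2 q))); lra).
  assert (Hk : 0 <= k) by (unfold k; apply Rle_mult_inv_pos; nra).
  assert (Hkr : k * r = sqrt 5 * eps + delta) by (unfold k; field; lra).
  assert (Hz : r < norm2 (Mm t2 f2 q)).
  { pose proof (Mm_perturb t2 f2 th2 ph2 eps q Ht2 Hf2 (Hn q Hq)).
    pose proof (norm2_le_add_sub (Mm th2 ph2 q) (Mm t2 f2 q)) as Htri.
    rewrite norm2_subC in Htri. lra. }
  rewrite <- (Rot_norm a).
  refine (interior_conv2_norm_lt (Mm t2 f2 q) _ k _ Hk _ _ Hint _); [lra| |].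
  - intros x [q' [Hq' ->]]. destruct (classic (q' = q)) as [-> | Hne].
    + unfold in_cone. rewrite norm2_sub_diag. unfold dot2, sub2; simpl. lra.
    + apply local_max_in_cone with th2 ph2 eps; auto.
  - pose proof (rotated_shadow_dist t1 f1 t2 f2 a th1 ph1 th2 ph2 al eps p q
                  ltac:(lra) Ht1 Hf1 Ht2 Hf2 Ha (Hn p Hp) (Hn q Hq)).
    nra.
Qed.

Theorem theorem5p16
  (Pl : list V3) (P Q : nat -> V3) (eps th1 ph1 th2 ph2 al : R) :
  polyhedron Pl -> radius1 Pl ->
  (forall i, (i < 3)%nat -> In (P i) Pl /\ In (Q i) Pl) ->
  congruent P Q ->
  0 < eps ->
  (* (A) *)
  (exists sP sQ : nat, (sP = 0 \/ sP = 1)%nat /\ (sQ = 0 \/ sQ = 1)%nat /\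
     forall i, (i < 3)%nat ->
       (-1) ^ sP * dot3 (Xv th1 ph1) (P i) > sqrt 2 * eps /\
       (-1) ^ sQ * dot3 (Xv th2 ph2) (Q i) > sqrt 2 * eps) ->
  (* (S) *)
  eps_spanning th1 ph1 eps P ->
  eps_spanning th2 ph2 eps Q ->
  (* (B) *)
  (exists r delta, 0 < r /\
     (forall i, (i < 3)%nat -> norm2 (Mm th2 ph2 (Q i)) > r + sqrt 2 * eps) /\
     (forall i, (i < 3)%nat ->
        delta >= norm2 (sub2 (Rot al (Mm th1 ph1 (P i))) (Mm th2 ph2 (Q i))) / 2) /\
     (forall i, (i < 3)%nat -> forall Qj, In Qj Pl -> Qj <> Q i ->
        (dot2 (Mm th2 ph2 (Q i)) (Mm th2 ph2 (sub3 (Q i) Qj))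
           - 2 * eps * norm3 (sub3 (Q i) Qj) * (sqrt 2 + eps))
        / ((norm2 (Mm th2 ph2 (Q i)) + sqrt 2 * eps)
           * (norm2 (Mm th2 ph2 (sub3 (Q i) Qj)) + 2 * sqrt 2 * eps))
        > (sqrt 5 * eps + delta) / r)) ->
  ~ (exists t1 f1 t2 f2 a,
       Rabs (t1 - th1) <= eps /\ Rabs (f1 - ph1) <= eps /\
       Rabs (t2 - th2) <= eps /\ Rabs (f2 - ph2) <= eps /\
       Rabs (a - al) <= eps /\
       forall p, In p Pl ->
         interior2 (conv2 (fun y => exists q, In q Pl /\ y = Mm t2 f2 q))
                   (Rot a (Mm t1 f1 p))).
Proof.
  intros _ [Hn _] Hin Hcong He [sP [sQ [_ [_ HA]]]] _ [HQn [HQ01 [HQ12 HQ20]]]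
    [r [delta [Hr [HBr [HBd HBc]]]]] [t1 [f1 [t2 [f2 [a (Ht1 & Hf1 & Ht2 & Hf2 & Ha & Hint)]]]]].
  apply (congruent_heights_not_dominated P Q t1 f1 t2 f2 ((-1) ^ sP) ((-1) ^ sQ) Hcong
           (sign_sqr sP) (sign_sqr sQ)).
  - intros i Hi. destruct (Hin i Hi) as [HPi HQi]. destruct (HA i Hi) as [HAP HAQ].
    assert (HhQ : 0 < (-1) ^ sQ * dot3 (Xv t2 f2) (Q i))
      by (eapply height_perturb; eauto using sign_sqr).
    split; [exact HhQ|].
    apply height_gt_of_shadow_lt; try apply sign_sqr; try exact HhQ.
    + apply congruent_dot3_sqr; auto.
    + apply (shadow_norm_lt Pl (P i) (Q i) eps th1 ph1 th2 ph2 al r delta t1 f1 t2 f2 a); auto.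
    + eapply height_perturb; eauto using sign_sqr.
  - eapply cross_Mm_perturb; eauto; lra.
  - eapply cross_Mm_perturb; eauto; lra.
  - eapply cross_Mm_perturb; eauto; lra.
Qed.
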